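(* Let $\tau$ be a topology on $\mathbb{R}$ such that $\tau_e\subset\tau$, every nonempty $\tau$-open set has the Baire property and is non-meager, and $\tau_\ast\subset\tau$. Then the class of $\tau_\ast$-Świątkowski functions coincides with the class of $\tau$-Świątkowski functions.
   Context: $\tau_e$ is the Euclidean topology; meagerness and the Baire property refer to $\tau_e$. $\tau_\ast=\{U\setminus M: U\in\tau_e,\ M\text{ meager}\}$. For a topology $\sigma$ and $f\colon\mathbb{R}\to\mathbb{R}$, $\mathrm{C}_\sigma(f)$ is the set of points at which $f\colon(\mathbb{R},\sigma)\to(\mathbb{R},\tau_e)$ is continuous, and $f$ is a $\sigma$-Świątkowski function if for all $a,b$ with $f(a)<f(b)$ there exists $x\in\mathrm{C}_\sigma(f)$ strictly between $a$ and $b$ with $f(a)<f(x)<f(b)$. *)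

From Stdlib Require Import Reals Lra Classical.
Open Scope R_scope.

Definition set_R := R -> Prop.

Definition is_topology (T : set_R -> Prop) : Prop :=
  T (fun _ => False) /\ T (fun _ => True) /\
  (forall (F : set_R -> Prop), (forall U, F U -> T U) ->
     T (fun x => exists U, F U /\ U x)) /\
  (forall U V, T U -> T V -> T (fun x => U x /\ V x)).

Definition eopen (U : set_R) : Prop :=
  forall x, U x -> exists eps, eps > 0 /\ forall y, Rabs (y - x) < eps -> U y.

Definition interior (A : set_R) : set_R :=
  fun x => exists U, eopen U /\ U x /\ forall y, U y -> A y.

Definition closure (A : set_R) : set_R :=
  fun x => forall U, eopen U -> U x -> exists y, U y /\ A y.

Definition nowhere_dense (A : set_R) : Prop :=
  forall x, ~ interior (closure A) x.

Definition meager (M : set_R) : Prop :=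
  exists N : nat -> set_R, (forall n, nowhere_dense (N n)) /\
    forall x, M x -> exists n, N n x.

Definition baire_property (A : set_R) : Prop :=
  exists U, eopen U /\ meager (fun x => (A x /\ ~ U x) \/ (U x /\ ~ A x)).

Definition tau_star (A : set_R) : Prop :=
  exists U M, eopen U /\ meager M /\ forall x, A x <-> (U x /\ ~ M x).

Definition cont_at (sigma : set_R -> Prop) (f : R -> R) (x : R) : Prop :=
  forall eps, eps > 0 ->
    exists V, sigma V /\ V x /\ forall y, V y -> Rabs (f y - f x) < eps.

Definition swiatkowski (sigma : set_R -> Prop) (f : R -> R) : Prop :=
  forall a b, f a < f b ->
    exists x, Rmin a b < x < Rmax a b /\ cont_at sigma f x /\ f a < f x < f b.

(** A [tau]-continuity point [x] of a [tau]-Świątkowski function comes with a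
    [tau]-open neighbourhood [V] of small oscillation; [V] has the Baire property
    and is non-meager, so it is comeager in some interval.  If [f] has no
    [tau]-continuity point in an interval, it is constant there.  Playing this
    strategy at scales [1/(m+1)] along a sequence of nested intervals, while also
    dodging the countably many nowhere dense exceptional sets collected so far,
    yields a point [z] lying in all the neighbourhoods; the sets
    [(interval) \ (exceptional meager set)] around [z] are [tau_star]-open, so
    [z] is a [tau_star]-continuity point.  Starting inside a neighbourhood on
    which [f a < f < f b] gives the nontrivial inclusion. *)

From Stdlib Require Import Reals Lra Lia Classical IndefiniteDescription.
Open Scope R_scope.

Lemma invariant_sequence {A : Type} (I : A -> Prop) (Rel : nat -> A -> A -> Prop) (a0 : A) :
  I a0 -> (forall n a, I a -> exists a', I a' /\ Rel n a a') ->
  exists s : nat -> A, s 0%nat = a0 /\ forall n, I (s n) /\ Rel n (s n) (s (S n)).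
Proof.
  intros H0 Hstep.
  assert (Htot : forall n a, exists a', I a -> I a' /\ Rel n a a').
  { intros n a. destruct (classic (I a)) as [Ia | nIa].
    - destruct (Hstep n a Ia) as [a' Ha']. exists a'. auto.
    - exists a. contradiction. }
  set (next := fun n a => proj1_sig (constructive_indefinite_description _ (Htot n a))).
  assert (Hnext : forall n a, I a -> I (next n a) /\ Rel n a (next n a))
    by (intros n a; exact (proj2_sig (constructive_indefinite_description _ (Htot n a)))).
  set (s := fix s n := match n with O => a0 | S n => next n (s n) end).
  assert (HI : forall n, I (s n)).
  { induction n as [| n IH]; [exact H0| apply (Hnext n _ IH)]. }
  exists s. split; [reflexivity|]. intros n. split; [apply HI| apply (Hnext n _ (HI n))].
Qed.

Lemma nested_intervals_common_point (lo hi : nat -> R) :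
  (forall n, lo n <= lo (S n)) -> (forall n, hi (S n) <= hi n) -> (forall n, lo n < hi n) ->
  exists z, forall n, lo n <= z <= hi n.
Proof.
  intros Hlo Hhi Hlohi.
  assert (Hlo_mono : forall n k, (n <= k)%nat -> lo n <= lo k).
  { intros n k Hnk. induction Hnk as [| k _ IH]; [lra| specialize (Hlo k); lra]. }
  assert (Hhi_mono : forall n k, (n <= k)%nat -> hi k <= hi n).
  { intros n k Hnk. induction Hnk as [| k _ IH]; [lra| specialize (Hhi k); lra]. }
  assert (Hlo_hi : forall n k, lo n < hi k).
  { intros n k. specialize (Hlo_mono n (max n k) ltac:(lia)).
    specialize (Hhi_mono k (max n k) ltac:(lia)). specialize (Hlohi (max n k)). lra. }
  destruct (completeness (fun v => exists n, v = lo n)) as [z [Hub Hlub]].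
  - exists (hi 0%nat). intros v [n ->]. left. apply Hlo_hi.
  - exists (lo 0%nat). eauto.
  - exists z. intros n. split.
    + apply Hub. eauto.
    + apply Hlub. intros v [k ->]. left. apply Hlo_hi.
Qed.

Lemma eopen_interval l r : eopen (fun y => l < y < r).
Proof.
  intros x Hx. exists (Rmin (x - l) (r - x)). split.
  - apply Rmin_case; lra.
  - intros y Hy. pose proof (Rmin_l (x - l) (r - x)). pose proof (Rmin_r (x - l) (r - x)).
    apply Rabs_def2 in Hy. lra.
Qed.

Lemma eopen_ball_in_interval (U : set_R) u l r : eopen U -> U u -> l < u < r ->
  exists d, d > 0 /\ l < u - d /\ u + d < r /\ forall y, u - d < y < u + d -> U y.
Proof.
  intros HU Hu Hlr. destruct (HU u Hu) as [e [He Hball]].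
  set (d := Rmin e (Rmin (u - l) (r - u)) / 2).
  pose proof (Rmin_l e (Rmin (u - l) (r - u))). pose proof (Rmin_r e (Rmin (u - l) (r - u))).
  pose proof (Rmin_l (u - l) (r - u)). pose proof (Rmin_r (u - l) (r - u)).
  assert (Rmin e (Rmin (u - l) (r - u)) > 0) by (apply Rmin_case; [lra| apply Rmin_case; lra]).
  exists d. unfold d. repeat split; try lra.
  intros y Hy. apply Hball. apply Rabs_def1; lra.
Qed.

Definition misses_subinterval (S : set_R) : Prop :=
  forall p q, p < q -> exists p' q', p < p' /\ p' < q' /\ q' < q /\
    forall y, p' < y < q' -> ~ S y.

Lemma nowhere_dense_misses_subinterval S : nowhere_dense S -> misses_subinterval S.
Proof.
  intros Hnd p q Hpq.
  assert (Hy : exists y, p < y < q /\ ~ closure S y).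
  { apply NNPP; intro C. apply (Hnd ((p + q) / 2)). exists (fun y => p < y < q).
    split; [apply eopen_interval|]. split; [lra|]. intros y Hy. apply NNPP; intro Hc.
    apply C; eauto. }
  destruct Hy as [y [Hy Hcl]].
  apply not_all_ex_not in Hcl. destruct Hcl as [U HU].
  apply imply_to_and in HU. destruct HU as [HUo HU].
  apply imply_to_and in HU. destruct HU as [HUy HU].
  destruct (eopen_ball_in_interval U y p q HUo HUy Hy) as [d [Hd [H1 [H2 Hball]]]].
  exists (y - d / 2), (y + d / 2). repeat split; try lra.
  intros w Hw Sw. apply HU. exists w. split; [apply Hball; lra| exact Sw].
Qed.

Lemma misses_subinterval_sub (A B : set_R) :
  (forall x, A x -> B x) -> misses_subinterval B -> misses_subinterval A.
Proof.
  intros HAB HB p q Hpq. destruct (HB p q Hpq) as [p' [q' [H1 [H2 [H3 H4]]]]].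
  exists p', q'. repeat split; auto. intros y Hy Ay. exact (H4 y Hy (HAB y Ay)).
Qed.

Lemma misses_subinterval_empty : misses_subinterval (fun _ => False).
Proof. intros p q Hpq. exists ((2 * p + q) / 3), ((p + 2 * q) / 3). repeat split; try lra. auto. Qed.

Lemma misses_subinterval_union A B :
  misses_subinterval A -> misses_subinterval B -> misses_subinterval (fun x => A x \/ B x).
Proof.
  intros HA HB p q Hpq. destruct (HA p q Hpq) as [p1 [q1 [H1 [H2 [H3 HA1]]]]].
  destruct (HB p1 q1 H2) as [p2 [q2 [G1 [G2 [G3 HB2]]]]].
  exists p2, q2. repeat split; try lra. intros y Hy [Ay | By].
  - apply (HA1 y); [lra| exact Ay].
  - apply (HB2 y Hy By).
Qed.

Lemma misses_subinterval_bigunion (Q : nat -> set_R) m :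
  (forall j, misses_subinterval (Q j)) ->
  misses_subinterval (fun x => exists j, (j < m)%nat /\ Q j x).
Proof.
  intros HQ. induction m as [| m IH].
  - apply (misses_subinterval_sub _ (fun _ => False)); [| exact misses_subinterval_empty].
    intros x [j [Hj _]]. lia.
  - apply (misses_subinterval_sub _ (fun x => (exists j, (j < m)%nat /\ Q j x) \/ Q m x)).
    + intros x [j [Hj Qx]]. destruct (Nat.eq_dec j m) as [-> | Hne]; [right; exact Qx|].
      left. exists j. split; [lia| exact Qx].
    + apply misses_subinterval_union; auto.
Qed.

Lemma nowhere_dense_square_union_misses_subinterval (P : nat -> nat -> set_R) m :
  (forall j k, nowhere_dense (P j k)) ->
  misses_subinterval (fun y => exists j k, (j <= m)%nat /\ (k <= m)%nat /\ P j k y).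
Proof.
  intros HP.
  apply (misses_subinterval_sub _ (fun y => exists j, (j < S m)%nat /\
           (fun x => exists k, (k < S m)%nat /\ P j k x) y)).
  - intros y [j [k [Hj [Hk Hy]]]]. exists j. split; [lia|]. exists k. split; [lia| exact Hy].
  - apply misses_subinterval_bigunion. intros j. apply misses_subinterval_bigunion.
    intros k. apply nowhere_dense_misses_subinterval, HP.
Qed.

Lemma meager_sub (A B : set_R) : meager A -> (forall x, B x -> A x) -> meager B.
Proof. intros [N [HN HA]] HBA. exists N. split; auto. Qed.

Lemma nowhere_dense_empty : nowhere_dense (fun _ => False).
Proof.
  intros x [U [HU [Ux HUcl]]].
  destruct (HUcl x Ux (fun _ => True)) as [y [_ []]]; [| exact I].
  intros z _. exists 1. split; [lra| auto].
Qed.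

Lemma meager_empty : meager (fun _ => False).
Proof.
  exists (fun _ _ => False). split; [intros; apply nowhere_dense_empty| intros x []].
Qed.

Definition comeager_in (W : set_R) (l r : R) : Prop :=
  meager (fun y => l < y < r /\ ~ W y).

Lemma baire_property_comeager_subinterval (B : set_R) l r :
  baire_property B -> ~ meager B -> (forall y, B y -> l < y < r) ->
  exists l' r', l <= l' /\ l' < r' /\ r' <= r /\ comeager_in B l' r'.
Proof.
  intros [U [HU HBU]] HnB HBlr.
  assert (Hu : exists u, U u /\ l < u < r).
  { apply NNPP; intro C. apply HnB. apply (meager_sub _ _ HBU).
    intros y By. left. split; [exact By|]. intro Uy. apply C. eauto. }
  destruct Hu as [u [Uu Hu]].
  destruct (eopen_ball_in_interval U u l r HU Uu Hu) as [d [Hd [H1 [H2 Hball]]]].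
  exists (u - d), (u + d). repeat split; try lra.
  apply (meager_sub _ _ HBU). intros y [Hy nBy]. right. split; [apply Hball, Hy| exact nBy].
Qed.

(** * The nested-interval game *)

Record stage := Stage { lo : R; hi : R; exc : nat -> nat -> set_R }.

Definition valid_stage (s : stage) : Prop :=
  lo s < hi s /\ forall j k, nowhere_dense (exc s j k).

Section NestedIntervalGame.

Variable Q : nat -> set_R -> Prop.

(** [exc s (S m)] is a family of nowhere dense sets covering the exceptional set
    of the witness chosen at move [m]; slot [0] holds the meager set to avoid. *)
Definition refines (m : nat) (s s' : stage) : Prop :=
  lo s < lo s' /\ hi s' < hi s /\
  (forall j, j <> S m -> exc s' j = exc s j) /\
  (forall y, lo s' < y < hi s' ->
     forall j k, (j <= m)%nat -> (k <= m)%nat -> ~ exc s j k y) /\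
  exists W, Q m W /\ forall y, lo s' < y < hi s' -> ~ W y -> exists k, exc s' (S m) k y.

Hypothesis strategy : forall m l r, l < r -> exists l' r' W,
  l <= l' /\ l' < r' /\ r' <= r /\ comeager_in W l' r' /\ Q m W.

Lemma refines_exists m s : valid_stage s -> exists s', valid_stage s' /\ refines m s s'.
Proof.
  intros [Hlohi Hexc].
  destruct (strategy m (lo s) (hi s) Hlohi) as [l' [r' [W [H1 [H2 [H3 [[N [HN HNW]] HQ]]]]]]].
  destruct (nowhere_dense_square_union_misses_subinterval (exc s) m Hexc l' r' H2)
    as [p [q [G1 [G2 [G3 Havoid]]]]].
  exists (Stage p q (fun j => if Nat.eqb j (S m) then N else exc s j)).
  unfold valid_stage, refines; cbn.
  repeat split; try lra.
  - intros j k. destruct (Nat.eqb j (S m)); auto.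
  - intros j Hj. apply Nat.eqb_neq in Hj. rewrite Hj. reflexivity.
  - intros y Hy j k Hj Hk Hjk. apply (Havoid y Hy). exists j, k. auto.
  - exists W. split; [exact HQ|]. intros y Hy nWy. rewrite Nat.eqb_refl.
    apply HNW. split; [lra| exact nWy].
Qed.

Section Play.

Variable s : nat -> stage.
Hypothesis s_play : forall n, valid_stage (s n) /\ refines n (s n) (s (S n)).

Lemma play_exc_stable j t : (j <= t)%nat -> exc (s t) j = exc (s j) j.
Proof.
  induction 1 as [| t Hjt IH]; [reflexivity|].
  destruct (s_play t) as [_ [_ [_ [Hkeep _]]]]. rewrite Hkeep; [exact IH| lia].
Qed.

Lemma play_limit_point : exists z, forall n, lo (s n) < z < hi (s n) /\
  forall k, ~ exc (s n) n k z.
Proof.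
  assert (Hlo : forall n, lo (s n) <= lo (s (S n))).
  { intros n. destruct (s_play n) as [_ [H _]]. lra. }
  assert (Hhi : forall n, hi (s (S n)) <= hi (s n)).
  { intros n. destruct (s_play n) as [_ [_ [H _]]]. lra. }
  destruct (nested_intervals_common_point _ _ Hlo Hhi (fun n => proj1 (proj1 (s_play n))))
    as [z Hz].
  assert (Hin : forall n, lo (s n) < z < hi (s n)).
  { intros n. destruct (s_play n) as [_ [H1 [H2 _]]]. specialize (Hz (S n)). lra. }
  exists z. intros n. split; [apply Hin|]. intros k Hk.
  set (t := max n k).
  destruct (s_play t) as [_ [_ [_ [_ [Havoid _]]]]].
  apply (Havoid z (Hin (S t)) n k ltac:(lia) ltac:(lia)).
  rewrite (play_exc_stable n t); [exact Hk| lia].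
Qed.

End Play.

Lemma nested_interval_game l0 r0 M : l0 < r0 -> meager M ->
  exists z, l0 < z < r0 /\ ~ M z /\
    forall m, exists l r W, l < z < r /\ comeager_in W l r /\ Q m W /\ W z.
Proof.
  intros Hlr [NM [HNM HM]].
  assert (Hvalid0 : valid_stage (Stage l0 r0 (fun _ => NM)))
    by (split; [exact Hlr| intros; apply HNM]).
  destruct (invariant_sequence _ _ _ Hvalid0 refines_exists) as [s [Hs0 Hs]].
  destruct (play_limit_point s Hs) as [z Hz].
  exists z. split; [|split].
  - specialize (Hz 0%nat). rewrite Hs0 in Hz. apply Hz.
  - intros Mz. destruct (HM z Mz) as [k Hk]. apply (proj2 (Hz 0%nat) k). rewrite Hs0. exact Hk.
  - intros m. destruct (proj2 (Hs m)) as [_ [_ [_ [_ [W [HQ Hcov]]]]]].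
    destruct (Hz (S m)) as [Hzin Hzexc].
    assert (Wz : W z).
    { apply NNPP; intro nWz. destruct (Hcov z Hzin nWz) as [k Hk]. exact (Hzexc k Hk). }
    exists (lo (s (S m))), (hi (s (S m))), W. repeat split; try apply Hzin; auto.
    exists (exc (s (S m)) (S m)). split; [intros; apply (Hs (S m))|].
    intros y [Hy nWy]. exact (Hcov y Hy nWy).
Qed.

End NestedIntervalGame.

Lemma cont_at_sub (sigma sigma' : set_R -> Prop) f x :
  (forall U, sigma U -> sigma' U) -> cont_at sigma f x -> cont_at sigma' f x.
Proof.
  intros Hsub Hc eps Heps. destruct (Hc eps Heps) as [V [HV HVx]]. exists V. auto.
Qed.

Lemma swiatkowski_sub (sigma sigma' : set_R -> Prop) f :
  (forall U, sigma U -> sigma' U) -> swiatkowski sigma f -> swiatkowski sigma' f.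
Proof.
  intros Hsub Hs a b Hab. destruct (Hs a b Hab) as [x [Hx [Hc Hf]]].
  exists x. split; [exact Hx|]. split; [exact (cont_at_sub _ _ f x Hsub Hc)| exact Hf].
Qed.

Lemma cont_at_separating_neighbourhood sigma f x lo hi :
  cont_at sigma f x -> lo < f x < hi ->
  exists V, sigma V /\ V x /\ forall y, V y -> lo < f y < hi.
Proof.
  intros Hc Hfx.
  destruct (Hc (Rmin (f x - lo) (hi - f x))) as [V [HV [Vx HVosc]]].
  { apply Rmin_case; lra. }
  exists V. split; [exact HV|]. split; [exact Vx|].
  intros y Vy. specialize (HVosc y Vy). apply Rabs_def2 in HVosc.
  pose proof (Rmin_l (f x - lo) (hi - f x)). pose proof (Rmin_r (f x - lo) (hi - f x)). lra.
Qed.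

Lemma swiatkowski_cont_point_or_const sigma f l r : swiatkowski sigma f -> l < r ->
  (exists x, l < x < r /\ cont_at sigma f x) \/
  (forall p q, l < p < r -> l < q < r -> f p = f q).
Proof.
  intros Hs Hlr. destruct (classic (exists x, l < x < r /\ cont_at sigma f x)) as [Hx | Hnx].
  { left. exact Hx. }
  right.
  assert (Hnlt : forall p q, l < p < r -> l < q < r -> ~ f p < f q).
  { intros p q Hp Hq Hpq. destruct (Hs p q Hpq) as [x [Hx [Hcx _]]]. apply Hnx. exists x.
    split; [| exact Hcx]. split.
    - apply Rlt_le_trans with (Rmin p q); [apply Rmin_glb_lt; lra| lra].
    - apply Rle_lt_trans with (Rmax p q); [lra| apply Rmax_lub_lt; lra]. }
  intros p q Hp Hq. pose proof (Hnlt p q Hp Hq). pose proof (Hnlt q p Hq Hp). lra.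
Qed.

Lemma cont_at_tau_star_of_comeager f z :
  (forall m, exists l r W, l < z < r /\ comeager_in W l r /\
     (exists c, forall y, W y -> Rabs (f y - c) < / INR (S m)) /\ W z) ->
  cont_at tau_star f z.
Proof.
  intros Hosc eps Heps.
  destruct (archimed_cor1 (eps / 2)) as [[| m] [Hm Hm0]]; [lra| lia|].
  destruct (Hosc m) as [l [r [W [Hz [HW [[c Hc] Wz]]]]]].
  exists (fun y => l < y < r /\ W y). split; [|split; [split; assumption|]].
  - exists (fun y => l < y < r), (fun y => l < y < r /\ ~ W y).
    split; [apply eopen_interval|]. split; [exact HW|].
    intros y. split; [tauto|]. intros [Hy Hny]. split; [exact Hy|].
    apply NNPP; intro nWy. exact (Hny (conj Hy nWy)).
  - intros y [_ Wy]. pose proof (Hc y Wy) as Hy. pose proof (Hc z Wz) as Hcz.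
    apply Rabs_def2 in Hy. apply Rabs_def2 in Hcz. apply Rabs_def1; lra.
Qed.

Section TauSwiatkowski.

Variable tau : set_R -> Prop.
Hypothesis tau_topology : is_topology tau.
Hypothesis eopen_tau : forall U, eopen U -> tau U.
Hypothesis tau_baire : forall U, tau U -> (exists x, U x) -> baire_property U /\ ~ meager U.

Lemma tau_open_comeager_subinterval V x l r : tau V -> V x -> l < x < r ->
  exists l' r', l <= l' /\ l' < r' /\ r' <= r /\ comeager_in V l' r'.
Proof.
  intros HV Vx Hx.
  set (B := fun y => V y /\ l < y < r).
  assert (HB : tau B).
  { destruct tau_topology as [_ [_ [_ Hinter]]]. apply Hinter; [exact HV|].
    apply eopen_tau, eopen_interval. }
  destruct (tau_baire B HB) as [HBbp HBnm]; [exists x; split; assumption|].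
  destruct (baire_property_comeager_subinterval B l r HBbp HBnm) as [l' [r' [H1 [H2 [H3 HW]]]]].
  { intros y [_ Hy]. exact Hy. }
  exists l', r'. repeat split; try assumption.
  apply (meager_sub _ _ HW). intros y [Hy nVy]. split; [exact Hy|]. intros [Vy _]. auto.
Qed.

Variable f : R -> R.
Hypothesis f_swiatkowski : swiatkowski tau f.

Lemma tau_swiatkowski_small_oscillation eps l r : eps > 0 -> l < r ->
  exists l' r' W, l <= l' /\ l' < r' /\ r' <= r /\ comeager_in W l' r' /\
    exists c, forall y, W y -> Rabs (f y - c) < eps.
Proof.
  intros Heps Hlr.
  destruct (swiatkowski_cont_point_or_const tau f l r f_swiatkowski Hlr)
    as [[x [Hx Hcx]] | Hconst].
  - destruct (Hcx eps Heps) as [V [HV [Vx HVosc]]].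
    destruct (tau_open_comeager_subinterval V x l r HV Vx Hx) as [l' [r' [H1 [H2 [H3 HW]]]]].
    exists l', r', V. repeat split; try assumption. exists (f x). exact HVosc.
  - exists l, r, (fun y => l < y < r). repeat split; try lra.
    + apply (meager_sub _ _ meager_empty). intros y [Hy nHy]. exact (nHy Hy).
    + exists (f ((l + r) / 2)). intros y Hy.
      rewrite (Hconst y ((l + r) / 2) Hy ltac:(lra)), Rminus_diag, Rabs_R0. exact Heps.
Qed.

Lemma tau_swiatkowski_tau_star_cont_point l r M : l < r -> meager M ->
  exists z, l < z < r /\ ~ M z /\ cont_at tau_star f z.
Proof.
  intros Hlr HM.
  destruct (nested_interval_game
    (fun m W => exists c, forall y, W y -> Rabs (f y - c) < / INR (S m))) with l r M
    as [z [Hz [nMz Hgame]]]; try assumption.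
  - intros m l' r' Hlr'. apply tau_swiatkowski_small_oscillation; [| exact Hlr'].
    apply Rinv_0_lt_compat, lt_0_INR. lia.
  - exists z. split; [exact Hz|]. split; [exact nMz|]. apply cont_at_tau_star_of_comeager.
    intros m. destruct (Hgame m) as [l' [r' [W [H1 [H2 [H3 H4]]]]]]. exists l', r', W. auto.
Qed.

End TauSwiatkowski.

Theorem mainTheorem15 (tau : set_R -> Prop) :
  is_topology tau ->
  (forall U, eopen U -> tau U) ->
  (forall U, tau U -> (exists x, U x) -> baire_property U /\ ~ meager U) ->
  (forall U, tau_star U -> tau U) ->
  forall f : R -> R, swiatkowski tau_star f <-> swiatkowski tau f.
Proof.
  intros Htop Heo Hbp Hst f. split; [apply swiatkowski_sub, Hst|].
  intros Hs a b Hab.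
  destruct (Hs a b Hab) as [x [Hx [Hcx Hfx]]].
  destruct (cont_at_separating_neighbourhood tau f x (f a) (f b) Hcx Hfx) as [V [HV [Vx HVf]]].
  destruct (tau_open_comeager_subinterval tau Htop Heo Hbp V x _ _ HV Vx Hx)
    as [l [r [Hl [Hlr [Hr HW]]]]].
  destruct (tau_swiatkowski_tau_star_cont_point tau Htop Heo Hbp f Hs l r _ Hlr HW)
    as [z [Hz [nMz Hcz]]].
  assert (Vz : V z) by (apply NNPP; intro nVz; exact (nMz (conj Hz nVz))).
  exists z. split; [lra|]. split; [exact Hcz| exact (HVf z Vz)].
Qed.
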